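(* Suppose there exists an (integer) $\mathrm{H}_t(m,n;s,k)$. Let $\alpha_1,\alpha_2,\lambda_1,\lambda_2$ be positive integers with $\alpha_1\le\lambda_2$, $\alpha_2\le\lambda_1$, $\alpha_1\lambda_1=\alpha_2\lambda_2$, $\alpha_1 s\le\lambda_2 n$ and $\alpha_2 k\le\lambda_1 m$. Then there exists an (integer) ${}^{\alpha_1\lambda_1}\mathrm{H}_t(\lambda_1 m,\lambda_2 n;\alpha_1 s,\alpha_2 k)$.
   Context: For positive integers $m,n,s,k,\lambda,t$ with $t$ dividing $\frac{2nk}{\lambda}$, let $v=\frac{2nk}{\lambda}+t$ and $J$ the subgroup of $\mathbb{Z}_v$ of order $t$. A ${}^\lambda\mathrm{H}_t(m,n;s,k)$ is an $m\times n$ partially filled array with entries in $\mathbb{Z}_v$ such that: (a) each row has exactly $s$ and each column exactly $k$ filled cells; (b) the multiset $\{\pm x: x$ an entry of a filled cell$\}$ contains each element of $\mathbb{Z}_v\setminus J$ exactly $\lambda$ times and no element of $J$; (c) every row and every column sums to $0$ in $\mathbb{Z}_v$. For $\lambda=1$ it is written $\mathrm{H}_t(m,n;s,k)$. The array is integer if, representing each entry by its integer representative in $\pm\{1,\dots,\lfloor v/2\rfloor\}$, every row and every column sums to $0$ in $\mathbb{Z}$. *)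

From mathcomp Require Import all_boot all_algebra.
Set Implicit Arguments. Unset Strict Implicit. Unset Printing Implicit Defensive.

Definition hv (n k lam t : nat) : nat := (2 * n * k) %/ lam + t.

(* an m x n partially filled array with entries in Z_v (represented by 'I_v);
   None = empty cell *)
Definition parray (m n v : nat) := 'I_m -> 'I_n -> option 'I_v.

Section Heffter.
Variables (m n v : nat).
Implicit Types (A : parray m n v).

Definition filled A i j : bool := A i j != None.

Definition val0 (o : option 'I_v) : nat := if o is Some x then val x else 0.

(* number of times y occurs in the multiset {±x : x an entry of a filled cell},
   negation taken mod v *)
Definition pm_count A (y : 'I_v) : nat :=
  \sum_(c : 'I_m * 'I_n)
    (if A c.1 c.2 is Some x then
       ((val x == val y) : nat) + (((v - val x) %% v == val y) : nat)
     else 0).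

(* J = subgroup of Z_v of order t = multiples of v/t *)
Definition inJ (t : nat) (y : 'I_v) : bool := (v %/ t) %| val y.

Definition row_sum A (i : 'I_m) : nat := \sum_(j < n) val0 (A i j).
Definition col_sum A (j : 'I_n) : nat := \sum_(i < m) val0 (A i j).

Definition heffter_conds (s k lam t : nat) A : Prop :=
  [/\ (forall i, #|[pred j | filled A i j]| = s),
      (forall j, #|[pred i | filled A i j]| = k),
      (forall y : 'I_v, pm_count A y = if inJ t y then 0 else lam),
      (forall i, row_sum A i %% v = 0) &
      (forall j, col_sum A j %% v = 0)].

(* integer: representatives in ±{1,...,floor(v/2)} (for x = v/2 either
   sign may be chosen) whose rows and columns sum to 0 in Z *)
Definition is_integer A : Prop :=
  exists f : 'I_m -> 'I_n -> int,
    [/\ (forall i j, match A i j with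
                     | Some x => (f i j == Posz (val x)) || (f i j == (Posz (val x) - Posz v)%R)
                     | None => f i j == 0
                     end),
        (forall i j, filled A i j -> (1 <= absz (f i j) <= v./2)%N),
        (forall i, \sum_(j < n) f i j = 0)%R &
        (forall j, \sum_(i < m) f i j = 0)%R].
End Heffter.

Definition heffter (m n s k lam t : nat) (A : parray m n (hv n k lam t)) : Prop :=
  [/\ [&& 0 < m, 0 < n, 0 < s, 0 < k, 0 < lam & 0 < t]%N,
      lam %| 2 * n * k,
      t %| (2 * n * k) %/ lam &
      heffter_conds s k lam t A].
Arguments heffter m n s k lam t A : clear implicits.

From mathcomp Require Import all_boot all_algebra zify.
Set Implicit Arguments. Unset Strict Implicit. Unset Printing Implicit Defensive.

(* Given a Heffter array A = H_t(m,n;s,k), we build the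
   (l1*m) x (l2*n) array B made of l1 x l2 blocks of size m x n, where block
   (b,c) is a copy of A when it is "selected" and is empty otherwise.  Block
   (b,c) is selected when c - b*a1 (mod l2) lies in [0, a1): every block row
   then contains a1 selected blocks (a cyclic window of length a1) and, since
   a1*l1 = a2*l2, the windows of the l1 block rows cover every block column
   exactly a2 times.  Consequently every row of B has a1*s filled cells, every
   column a2*k, rows and columns still sum to 0 (they are sums of copies of
   rows/columns of A), and every element of Z_v \ J appears a1*l1 times in the
   multiset of ±entries, one for each of the a1*l1 selected copies of A.
   Finally v does not change: 2(l2 n)(a2 k)/(a1 l1) = 2nk because
   a1 l1 = a2 l2, and the integer lift of A copied blockwise is an integer lift
   of B.  The file establishes the modular counting facts, then the block
   decomposition of ordinals, then the construction and its properties. *)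

Lemma sub_mod_eq (X r c l : nat) : r < l -> c < l ->
  ((c + (l - X %% l)) %% l == r) = ((X + r) %% l == c).
Proof.
move=> lt_rl lt_cl; have l_gt0 : 0 < l by lia.
have := ltn_pmod X l_gt0 => lt_Xl.
apply/eqP/eqP => <-.
- rewrite modnDmr -modnDml.
  have -> : X %% l + (c + (l - X %% l)) = c + l by lia.
  by rewrite modnDr modn_small.
- rewrite modnDml.
  have -> : X + r + (l - X %% l) = X %/ l * l + (r + l) by have := divn_eq X l; lia.
  by rewrite modnMDl modnDr modn_small.
Qed.

Lemma card_pred_sum (T : finType) (P : pred T) :
  #|[pred x | P x]| = \sum_x (P x : nat).
Proof.
by rewrite -sum1_card big_mkcond /=; apply: eq_bigr => x _; rewrite inE; case: (P x).
Qed.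

Lemma sum_ord_eq (N x : nat) : \sum_(r < N) ((x == r) : nat) = (x < N).
Proof.
case: (ltnP x N) => [lt_xN | le_Nx].
- rewrite (bigD1 (Ordinal lt_xN)) //= eqxx big1 ?addn0 // => i neq_i.
  by case: eqP => // x_i; case/eqP: neq_i; apply: val_inj.
- by rewrite big1 // => i _; rewrite (gtn_eqF (leq_trans (ltn_ord i) le_Nx)).
Qed.

Section Blocks.
Variables (l m : nat).

Lemma block_idx_lt (b : 'I_l) (r : 'I_m) : b * m + r < l * m.
Proof. have := ltn_ord b; have := ltn_ord r; nia. Qed.

Definition block_idx (b : 'I_l) (r : 'I_m) : 'I_(l * m) :=
  Ordinal (block_idx_lt b r).

Hypothesis m_gt0 : 0 < m.

Lemma block_of_lt (i : 'I_(l * m)) : i %/ m < l.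
Proof. by rewrite ltn_divLR // ltn_ord. Qed.

Definition block_of (i : 'I_(l * m)) : 'I_l := Ordinal (block_of_lt i).
Definition offset_of (i : 'I_(l * m)) : 'I_m := Ordinal (ltn_pmod i m_gt0).

Lemma block_of_idx b r : block_of (block_idx b r) = b.
Proof. by apply: val_inj => /=; rewrite divnMDl // divn_small // addn0. Qed.

Lemma offset_of_idx b r : offset_of (block_idx b r) = r.
Proof. by apply: val_inj => /=; rewrite modnMDl modn_small. Qed.

Lemma block_idxK i : block_idx (block_of i) (offset_of i) = i.
Proof. by apply: val_inj => /=; rewrite -divn_eq. Qed.

Lemma big_blocks (R : Type) (idx : R) (op : Monoid.com_law idx)
    (F : 'I_(l * m) -> R) :
  \big[op/idx]_(i < l * m) F i =
  \big[op/idx]_(b < l) \big[op/idx]_(r < m) F (block_idx b r).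
Proof.
rewrite pair_big /= (reindex (fun p : 'I_l * 'I_m => block_idx p.1 p.2)) //.
apply: onW_bij; exists (fun i => (block_of i, offset_of i)) => [[b r] | i] /=.
  by rewrite block_of_idx offset_of_idx.
exact: block_idxK.
Qed.
End Blocks.

(* Block (b,c) of an l1 x l blocks grid is selected iff c - b*a (mod l) < a. *)
Definition selected (l a b c : nat) : bool := (c + (l - (b * a) %% l)) %% l < a.

Lemma selected_row (l a b : nat) : 0 < l -> a <= l ->
  \sum_(c < l) (selected l a b c : nat) = a.
Proof.
move=> l_gt0 le_al.
under eq_bigr do rewrite /selected -sum_ord_eq.
rewrite exchange_big /= -[RHS]card_ord -sum1_card; apply: eq_bigr => r _.
under eq_bigr => c _ do rewrite sub_mod_eq ?(leq_trans (ltn_ord r) le_al) //.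
by rewrite sum_ord_eq ltn_pmod.
Qed.

(* Each block column contains exactly a2 selected blocks: the windows
   b*a1 + [0, a1) for b < l1 tile [0, l1*a1) = [0, a2*l) which hits every
   residue mod l exactly a2 times. *)
Lemma selected_col (l1 l a1 a2 c : nat) : 0 < l -> 0 < a1 -> a1 <= l ->
  a1 * l1 = a2 * l -> c < l ->
  \sum_(b < l1) (selected l a1 b c : nat) = a2.
Proof.
move=> l_gt0 a1_gt0 le_a1l tile lt_cl.
under eq_bigr do rewrite /selected -sum_ord_eq.
transitivity (\sum_(x < l1 * a1) ((x %% l == c) : nat)).
  rewrite (big_blocks a1_gt0); apply: eq_bigr => b _; apply: eq_bigr => r _.
  by rewrite sub_mod_eq ?(leq_trans (ltn_ord r) le_a1l).
rewrite mulnC tile (big_blocks l_gt0) -[RHS]card_ord -sum1_card.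
apply: eq_bigr => q _.
under eq_bigr => r _ do rewrite /= modnMDl modn_small // eq_sym.
by rewrite sum_ord_eq lt_cl.
Qed.

Section Inflation.
Variables (v m n a1 l1 l2 : nat) (m_gt0 : 0 < m) (n_gt0 : 0 < n).
Variable A : parray m n v.

Definition inflate : parray (l1 * m) (l2 * n) v := fun i j =>
  if selected l2 a1 (block_of m_gt0 i) (block_of n_gt0 j)
  then A (offset_of m_gt0 i) (offset_of n_gt0 j) else None.

Variable G : option 'I_v -> nat.
Hypothesis G_None : G None = 0.

Lemma inflate_row i :
  \sum_(j < l2 * n) G (inflate i j) =
  (\sum_(c < l2) (selected l2 a1 (block_of m_gt0 i) c : nat)) *
    \sum_(q < n) G (A (offset_of m_gt0 i) q).
Proof.
rewrite (big_blocks n_gt0) big_distrl /=; apply: eq_bigr => c _.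
under eq_bigr => q _ do rewrite /inflate block_of_idx offset_of_idx.
by case: selected; rewrite ?mul1n // mul0n big1.
Qed.

Lemma inflate_col j :
  \sum_(i < l1 * m) G (inflate i j) =
  (\sum_(b < l1) (selected l2 a1 b (block_of n_gt0 j) : nat)) *
    \sum_(r < m) G (A r (offset_of n_gt0 j)).
Proof.
rewrite (big_blocks m_gt0) big_distrl /=; apply: eq_bigr => b _.
under eq_bigr => r _ do rewrite /inflate block_of_idx offset_of_idx.
by case: selected; rewrite ?mul1n // mul0n big1.
Qed.

Lemma inflate_total :
  \sum_(i < l1 * m) \sum_(j < l2 * n) G (inflate i j) =
  (\sum_(b < l1) \sum_(c < l2) (selected l2 a1 b c : nat)) *
    \sum_(r < m) \sum_(q < n) G (A r q).
Proof.
rewrite (big_blocks m_gt0) big_distrl /=; apply: eq_bigr => b _.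
rewrite big_distrr /=; apply: eq_bigr => r _.
by rewrite inflate_row block_of_idx offset_of_idx.
Qed.
End Inflation.
Arguments inflate : clear implicits.
Arguments inflate_row {v m n a1 l1 l2 m_gt0 n_gt0 A} G G_None i.
Arguments inflate_col {v m n a1 l1 l2 m_gt0 n_gt0 A} G G_None j.
Arguments inflate_total {v m n a1 l1 l2 m_gt0 n_gt0 A} G G_None.

Definition pm_weight (v : nat) (y : 'I_v) (o : option 'I_v) : nat :=
  if o is Some x then ((val x == val y) : nat) + (((v - val x) %% v == val y) : nat)
  else 0.

Lemma pm_count_sum (M N v : nat) (X : parray M N v) (y : 'I_v) :
  pm_count X y = \sum_(i < M) \sum_(j < N) pm_weight y (X i j).
Proof. by rewrite pair_bigA. Qed.

Lemma inflate_heffter_conds (v m n s k t a1 a2 l1 l2 : nat)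
    (m_gt0 : 0 < m) (n_gt0 : 0 < n) (A : parray m n v) :
  0 < a1 -> 0 < l2 -> a1 <= l2 -> a1 * l1 = a2 * l2 ->
  heffter_conds s k 1 t A ->
  heffter_conds (a1 * s) (a2 * k) (a1 * l1) t (inflate v m n a1 l1 l2 m_gt0 n_gt0 A).
Proof.
move=> a1_gt0 l2_gt0 le_a1l2 tile [rowsA colsA pmA rsumA csumA].
have filled_count (M N : nat) (X : parray M N v) i j :
  (filled X i j : nat) = (X i j != None) by [].
split.
- move=> i; rewrite card_pred_sum.
  under eq_bigr do rewrite filled_count.
  rewrite (inflate_row (fun o => (o != None : nat))) //.
  by rewrite selected_row // -(rowsA (offset_of m_gt0 i)) card_pred_sum.
- move=> j; rewrite card_pred_sum.
  under eq_bigr do rewrite filled_count.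
  rewrite (inflate_col (fun o => (o != None : nat))) //.
  rewrite (selected_col l2_gt0 a1_gt0 le_a1l2 tile) ?ltn_ord //.
  by rewrite -(colsA (offset_of n_gt0 j)) card_pred_sum.
- move=> y; rewrite pm_count_sum (inflate_total (pm_weight y)) // -pm_count_sum pmA.
  under eq_bigr => b _ do rewrite selected_row //.
  rewrite sum_nat_const card_ord /=.
  by case: inJ; rewrite ?muln0 // muln1 mulnC.
- move=> i; rewrite /row_sum (inflate_row (@val0 v)) //.
  by apply/eqP; rewrite -/(dvdn _ _) dvdn_mull //; apply/eqP/rsumA.
- move=> j; rewrite /col_sum (inflate_col (@val0 v)) //.
  by apply/eqP; rewrite -/(dvdn _ _) dvdn_mull //; apply/eqP/csumA.
Qed.

(* Copying an integer lift of A blockwise gives an integer lift of B: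
   each row/column of the lift is a sum of zero-sum rows/columns. *)
Lemma inflate_integer (v m n a1 l1 l2 : nat) (m_gt0 : 0 < m) (n_gt0 : 0 < n)
    (A : parray m n v) :
  is_integer A -> is_integer (inflate v m n a1 l1 l2 m_gt0 n_gt0 A).
Proof.
case=> f [f_rep f_range f_rows f_cols].
exists (fun i j => if selected l2 a1 (block_of m_gt0 i) (block_of n_gt0 j)
                   then f (offset_of m_gt0 i) (offset_of n_gt0 j) else 0%R).
split.
- by move=> i j; rewrite /inflate; case: selected => //; apply: f_rep.
- by move=> i j; rewrite /filled /inflate; case: selected => //; apply: f_range.
- move=> i; rewrite (big_blocks n_gt0) big1 // => c _.
  under eq_bigr => q _ do rewrite block_of_idx offset_of_idx.
  by case: selected; [apply: f_rows | rewrite big1].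
- move=> j; rewrite (big_blocks m_gt0) big1 // => b _.
  under eq_bigr => r _ do rewrite block_of_idx offset_of_idx.
  by case: selected; [apply: f_cols | rewrite big1].
Qed.

Lemma heffter_of_conds (M N S K lam t v : nat) (X : parray M N v) :
  v = hv N K lam t ->
  [&& 0 < M, 0 < N, 0 < S, 0 < K, 0 < lam & 0 < t] ->
  lam %| 2 * N * K -> t %| (2 * N * K) %/ lam ->
  heffter_conds S K lam t X ->
  exists2 Y : parray M N (hv N K lam t),
    heffter M N S K lam t Y & (is_integer X -> is_integer Y).
Proof. by move=> def_v; subst v => pos dvd_lam dvd_t conds; exists X. Qed.

Theorem proposition4 (m n s k t a1 a2 l1 l2 : nat) :
  (0 < a1)%N -> (0 < a2)%N -> (0 < l1)%N -> (0 < l2)%N ->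
  (a1 <= l2)%N -> (a2 <= l1)%N -> a1 * l1 = a2 * l2 ->
  (a1 * s <= l2 * n)%N -> (a2 * k <= l1 * m)%N ->
  ((exists A : parray m n (hv n k 1 t), heffter m n s k 1 t A) ->
     exists B : parray (l1 * m) (l2 * n) (hv (l2 * n) (a2 * k) (a1 * l1) t),
       heffter (l1 * m) (l2 * n) (a1 * s) (a2 * k) (a1 * l1) t B)
  /\
  ((exists A : parray m n (hv n k 1 t), heffter m n s k 1 t A /\ is_integer A) ->
     exists B : parray (l1 * m) (l2 * n) (hv (l2 * n) (a2 * k) (a1 * l1) t),
       heffter (l1 * m) (l2 * n) (a1 * s) (a2 * k) (a1 * l1) t B /\ is_integer B).
Proof.
(* The bounds a2 <= l1, a1 s <= l2 n and a2 k <= l1 m follow from the other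
   hypotheses (s <= n and k <= m hold in any Heffter array) and are unused. *)
move=> a1_gt0 a2_gt0 l1_gt0 l2_gt0 le_a1l2 _ tile _ _.
have double_count : 2 * (l2 * n) * (a2 * k) = 2 * n * k * (a1 * l1).
  by rewrite tile; nia.
have lam_gt0 : 0 < a1 * l1 by rewrite muln_gt0 a1_gt0.
have same_v : hv n k 1 t = hv (l2 * n) (a2 * k) (a1 * l1) t.
  by rewrite /hv divn1 double_count mulnK.
have inflate_ok (A : parray m n (hv n k 1 t)) : heffter m n s k 1 t A ->
    exists2 B : parray (l1 * m) (l2 * n) (hv (l2 * n) (a2 * k) (a1 * l1) t),
      heffter (l1 * m) (l2 * n) (a1 * s) (a2 * k) (a1 * l1) t B &
      (is_integer A -> is_integer B).
  case=> pos _ dvd_t conds; have /andP[m_gt0 /and5P[n_gt0 s_gt0 k_gt0 _ t_gt0]] := pos.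
  have pos' : [&& 0 < l1 * m, 0 < l2 * n, 0 < a1 * s, 0 < a2 * k, 0 < a1 * l1 & 0 < t].
    by rewrite !muln_gt0 m_gt0 n_gt0 s_gt0 k_gt0 a1_gt0 a2_gt0 l1_gt0 l2_gt0 t_gt0.
  have dvd_lam' : a1 * l1 %| 2 * (l2 * n) * (a2 * k) by rewrite double_count dvdn_mull.
  have dvd_t' : t %| 2 * (l2 * n) * (a2 * k) %/ (a1 * l1).
    by rewrite double_count mulnK // -(divn1 (2 * n * k)).
  have [B HB int_B] := heffter_of_conds same_v pos' dvd_lam' dvd_t'
    (inflate_heffter_conds m_gt0 n_gt0 a1_gt0 l2_gt0 le_a1l2 tile conds).
  by exists B => // /inflate_integer/int_B.
by split=> [[A /inflate_ok[B HB _]] | [A [/inflate_ok[B HB int_B] /int_B]]];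
  exists B.
Qed.
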